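(* Let $f:X\to Y$ be an equivariant map of nominal sets, $u\in X$ an $f$-safe element and $x\in\mathcal V$ with $x\notin\mathsf{bv}_f(u)$. Then $(x,u)$ is $(\theta_Y\circ(\mathcal V\times f))$-safe, where $\theta_Y\circ(\mathcal V\times f):\mathcal V\times X\to[\mathcal V]Y$, $(y,w)\mapsto\langle y\rangle f(w)$.
   Context: Nominal sets over a countably infinite set $\mathcal V$ of names; $\mathsf{supp}$ least finite support. $[\mathcal V]Y$ is the quotient of $\mathcal V\times Y$ by $(x_1,u_1)\sim(x_2,u_2)$ iff $(x_1\ z)\cdot u_1=(x_2\ z)\cdot u_2$ for some $z$ fresh for all four, classes $\langle x\rangle u$; $\theta_Y(x,u)=\langle x\rangle u$. For equivariant $f$: $u$ is $f$-safe if $|\mathsf{supp}(u)|=\max\{|\mathsf{supp}(v)|:v\in f^{-1}(f(u))\}$ (maximum existing); $\mathsf{bv}_f(u)=\mathsf{supp}(u)\setminus\mathsf{supp}(f(u))$. *)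

From Stdlib Require Import Arith List Lia.
Import ListNotations.
Set Implicit Arguments.

(** Names: V := nat (countably infinite).
    Finitely supported permutations of names. *)
Record perm := Perm {
  pfun :> nat -> nat;
  pinv : nat -> nat;
  pK : forall a, pinv (pfun a) = a;
  pKV : forall a, pfun (pinv a) = a;
  pfin : exists l : list nat, forall a, ~ In a l -> pfun a = a }.

Definition swapf (a b c : nat) : nat :=
  if Nat.eqb c a then b else if Nat.eqb c b then a else c.

Lemma swapf_invol a b c : swapf a b (swapf a b c) = c.
Proof.
  unfold swapf.
  destruct (Nat.eqb_spec c a) as [->|Hca].
  - destruct (Nat.eqb_spec b a) as [->|Hba]; [reflexivity|].
    rewrite Nat.eqb_refl; reflexivity.
  - destruct (Nat.eqb_spec c b) as [->|Hcb].
    + rewrite Nat.eqb_refl; reflexivity.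
    + apply Nat.eqb_neq in Hca, Hcb. rewrite Hca, Hcb. reflexivity.
Qed.

Lemma swapf_fin a b : exists l : list nat, forall c, ~ In c l -> swapf a b c = c.
Proof.
  exists [a; b]; intros c Hc; unfold swapf.
  destruct (Nat.eqb_spec c a); [subst; simpl in Hc; tauto|].
  destruct (Nat.eqb_spec c b); [subst; simpl in Hc; tauto|]. reflexivity.
Qed.

Definition swap (a b : nat) : perm :=
  @Perm (swapf a b) (swapf a b) (swapf_invol a b) (swapf_invol a b) (swapf_fin a b).

Record nominal := Nominal {
  carrier :> Type;
  act : perm -> carrier -> carrier;
  act_id : forall (p : perm) x, (forall a, p a = a) -> act p x = x;
  act_comp : forall (p q r : perm) x, (forall a, r a = p (q a)) ->
      act r x = act p (act q x);
  fin_supp : forall x, exists l : list nat,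
      forall p : perm, (forall a, In a l -> p a = a) -> act p x = x }.

Arguments act {n} p x.

Definition supports {X : nominal} (l : list nat) (x : X) : Prop :=
  forall p : perm, (forall a, In a l -> p a = a) -> act p x = x.

(** Least finite support: a belongs to supp x iff a lies in every finite
    support of x. *)
Definition in_supp {X : nominal} (x : X) (a : nat) : Prop :=
  forall l, supports l x -> In a l.

Definition supp_card {X : nominal} (x : X) (n : nat) : Prop :=
  exists l : list nat, NoDup l /\ length l = n /\ (forall a, In a l <-> in_supp x a).

Definition equivariant {X Y : nominal} (f : X -> Y) : Prop :=
  forall (p : perm) (x : X), f (act p x) = act p (f x).

(** u is f-safe: |supp u| = max { |supp v| : v in f^{-1}(f u) },
    the maximum existing. Only the domain structure and equality in the
    codomain are used. *)
Definition safe {X : nominal} {Z : Type} (f : X -> Z) (u : X) : Prop :=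
  exists n, supp_card u n /\
    forall v m, f v = f u -> supp_card v m -> m <= n.

Definition in_bv {X Y : nominal} (f : X -> Y) (u : X) (a : nat) : Prop :=
  in_supp u a /\ ~ in_supp (f u) a.

Definition names_nominal : nominal.
Proof.
  refine (@Nominal nat (fun p a => p a) _ _ _).
  - intros p x H; apply H.
  - intros p q r x H; apply H.
  - intros x; exists [x]; intros p H; apply H; simpl; auto.
Defined.

Definition prod_nominal (X : nominal) : nominal.
Proof.
  refine (@Nominal (nat * X)%type (fun p ax => (p (fst ax), act p (snd ax))) _ _ _).
  - intros p [a x] H; simpl; rewrite H, act_id; auto.
  - intros p q r [a x] H; simpl; rewrite H, (act_comp _ p q r x H); reflexivity.
  - intros [a x]. destruct (fin_supp _ x) as [l Hl].
    exists (a :: l); intros p Hp; simpl.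
    rewrite Hp by (simpl; auto). rewrite Hl; auto.
    intros b Hb; apply Hp; simpl; auto.
Defined.

Definition alpha {Y : nominal} (p1 p2 : nat * Y) : Prop :=
  exists z, z <> fst p1 /\ z <> fst p2 /\
    ~ in_supp (snd p1) z /\ ~ in_supp (snd p2) z /\
    act (swap (fst p1) z) (snd p1) = act (swap (fst p2) z) (snd p2).

(** [V]Y: the quotient of V x Y by alpha, as the type of equivalence classes. *)
Definition abs (Y : nominal) : Type :=
  { C : nat * Y -> Prop | exists x u, forall q, C q <-> alpha (x, u) q }.

Lemma theta_class {Y : nominal} (xu : nat * Y) :
  exists x u, forall q, alpha xu q <-> alpha (x, u) q.
Proof. destruct xu as [x u]; exists x, u; intros q; tauto. Qed.

Definition theta {Y : nominal} (xu : nat * Y) : abs Y :=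
  exist _ (fun q => alpha xu q) (theta_class xu).

Definition theta_comp {X Y : nominal} (f : X -> Y) : prod_nominal X -> abs Y :=
  fun yw => theta (fst yw, f (snd yw)).

From Stdlib Require Import Arith List Lia FinFun Classical ClassicalEpsilon.

(* Let <x>f(u) = <y>f(w) with (y, w) in V x X.  Unfolding alpha-equivalence
   gives a name z with (y z).f(w) = (x z).f(u), so the renamed element
   w' := (x z)(y z).w lies in the fibre of f over f(u); since u is f-safe
   and renaming preserves the size of supports, |supp w| <= |supp u|.
   Because supp (a, t) = {a} u supp t, the pair (x, u) has support size
   |supp u| if x is in supp u and |supp u| + 1 otherwise, while (y, w) has
   size at most |supp w| + 1.  The only delicate case is x in supp u: then
   x is not bound, i.e. x is in supp f(u), and transporting this along the
   renaming puts y in supp f(w), hence in supp w, so (y, w) has size |supp w|. *)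

Definition pcomp (p q : perm) : perm.
Proof.
  refine (@Perm (fun a => p (q a)) (fun a => pinv q (pinv p a)) _ _ _).
  - intros a; rewrite !pK; reflexivity.
  - intros a; rewrite !pKV; reflexivity.
  - destruct (pfin p) as [l1 H1], (pfin q) as [l2 H2]; exists (l1 ++ l2).
    intros a Ha; rewrite in_app_iff in Ha. rewrite H2 by tauto. apply H1; tauto.
Defined.

Definition pinverse (p : perm) : perm.
Proof.
  refine (@Perm (pinv p) p (pKV p) (pK p) _).
  destruct (pfin p) as [l Hl]; exists l.
  intros a Ha. rewrite <- (Hl a Ha) at 1. apply pK.
Defined.

Lemma act_pinverse_l {X : nominal} (p : perm) (t : X) :
  act (pinverse p) (act p t) = t.
Proof.
  rewrite <- (act_comp X (pinverse p) p (pcomp (pinverse p) p) t)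
    by (intros; reflexivity).
  apply act_id; intros a; apply pK.
Qed.

Lemma act_involution {X : nominal} (p : perm) (t : X) :
  (forall a, p (p a) = a) -> act p (act p t) = t.
Proof.
  intros Hp. rewrite <- (act_comp X p p (pcomp p p) t) by (intros; reflexivity).
  apply act_id; exact Hp.
Qed.

Lemma swapf_l a b : swapf a b a = b.
Proof. unfold swapf; rewrite Nat.eqb_refl; reflexivity. Qed.

Lemma swapf_r a b : swapf a b b = a.
Proof.
  unfold swapf; destruct (Nat.eqb_spec b a); [subst|]; rewrite ?Nat.eqb_refl; auto.
Qed.

Lemma swapf_other a b c : c <> a -> c <> b -> swapf a b c = c.
Proof.
  intros Ha Hb; unfold swapf.
  apply Nat.eqb_neq in Ha, Hb; rewrite Ha, Hb; reflexivity.
Qed.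

Lemma fresh_name (l : list nat) : exists z, ~ In z l.
Proof.
  exists (S (list_max l)); intros Hin.
  assert (Hle : list_max l <= list_max l) by apply le_n.
  apply list_max_le, Forall_forall with (x := S (list_max l)) in Hle; [lia|exact Hin].
Qed.

Lemma supports_act {X : nominal} (p : perm) (l : list nat) (t : X) :
  supports l t -> supports (map p l) (act p t).
Proof.
  intros Hl q Hq.
  set (r := pcomp (pinverse p) (pcomp q p)).
  rewrite <- (act_comp X q p (pcomp q p) t) by (intros; reflexivity).
  rewrite (act_comp X p r (pcomp q p) t)
    by (intros a; symmetry; apply (pKV p)).
  rewrite (Hl r); [reflexivity|].
  intros a Ha; cbn. rewrite Hq by (apply in_map; exact Ha). apply pK.
Qed.

Lemma in_supp_act_l {X : nominal} (p : perm) (t : X) c :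
  in_supp (act p t) c -> in_supp t (pinv p c).
Proof.
  intros H l Hl. destruct (proj1 (in_map_iff _ _ _) (H _ (supports_act p _ _ Hl)))
    as [d [<- Hd]].
  rewrite pK; exact Hd.
Qed.

Lemma in_supp_act {X : nominal} (p : perm) (t : X) c :
  in_supp (act p t) c <-> in_supp t (pinv p c).
Proof.
  split; [apply in_supp_act_l|].
  intros H; rewrite <- (act_pinverse_l p t) in H.
  apply in_supp_act_l in H.
  change (in_supp (act p t) (p (pinv p c))) in H. rewrite pKV in H; exact H.
Qed.

Lemma supp_card_act {X : nominal} (p : perm) {t : X} {n : nat} :
  supp_card t n -> supp_card (act p t) n.
Proof.
  intros [L [HN [HL HS]]]. exists (map p L); split; [|split].
  - apply Injective_map_NoDup; [|exact HN].
    intros a b E. rewrite <- (pK p a), <- (pK p b), E; reflexivity.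
  - rewrite length_map; exact HL.
  - intros c. rewrite in_supp_act, <- HS, in_map_iff. split.
    + intros [d [<- Hd]]. rewrite pK; exact Hd.
    + intros Hd. exists (pinv p c); split; [apply pKV|exact Hd].
Qed.

Lemma in_supp_equivariant {X Y : nominal} (f : X -> Y) (t : X) a :
  equivariant f -> in_supp (f t) a -> in_supp t a.
Proof. intros Hf H l Hl. apply H. intros p Hp. rewrite <- Hf, Hl; auto. Qed.

(* Every element has a least support of some size: filter a finite support. *)
Lemma supp_card_exists {X : nominal} (t : X) : exists n, supp_card t n.
Proof.
  destruct (fin_supp X t) as [l Hl].
  set (keep := fun a => if excluded_middle_informative (in_supp t a) then true else false).
  exists (length (nodup Nat.eq_dec (filter keep l))), (nodup Nat.eq_dec (filter keep l)).
  split; [apply NoDup_nodup|split; [reflexivity|]].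
  intros a. rewrite nodup_In, filter_In. unfold keep.
  destruct excluded_middle_informative as [Ha|Ha]; split; try tauto.
  - intros H; split; [exact (H l Hl)|reflexivity].
  - intros [_ E]; discriminate E.
Qed.

Lemma supp_card_unique {X : nominal} {t : X} {n m : nat} :
  supp_card t n -> supp_card t m -> n = m.
Proof.
  intros [L1 [N1 [<- H1]]] [L2 [N2 [<- H2]]].
  apply Nat.le_antisymm; apply NoDup_incl_length; auto; intros a Ha.
  - apply H2, H1, Ha.
  - apply H1, H2, Ha.
Qed.

Lemma supports_pair {X : nominal} (a : nat) (t : X) l :
  supports l t -> @supports (prod_nominal X) (a :: l) (a, t).
Proof.
  intros Hl p Hp; cbn. rewrite Hp by (left; reflexivity).
  rewrite Hl by (intros b Hb; apply Hp; right; exact Hb). reflexivity.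
Qed.

Lemma supports_pair_snd {X : nominal} (a : nat) (t : X) l :
  @supports (prod_nominal X) l (a, t) -> supports l t.
Proof. intros Hl p Hp. exact (f_equal snd (Hl p Hp)). Qed.

(* A name is in the support of every pair it heads: otherwise swapping it
   with a fresh name would fix the pair. *)
Lemma in_supp_pair_fst {X : nominal} (a : nat) (t : X) :
  @in_supp (prod_nominal X) (a, t) a.
Proof.
  intros l Hl. apply NNPP; intros Ha.
  destruct (fresh_name (a :: l)) as [c Hc].
  assert (E : swapf a c a = a).
  { refine (f_equal fst (Hl (swap a c) _)).
    intros d Hd; apply swapf_other; intros ->; [exact (Ha Hd)|apply Hc; right; exact Hd]. }
  rewrite swapf_l in E. apply Hc; left; symmetry; exact E.
Qed.

Lemma in_supp_pair {X : nominal} (a : nat) (t : X) b :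
  @in_supp (prod_nominal X) (a, t) b <-> b = a \/ in_supp t b.
Proof.
  split.
  - intros H. destruct (classic (b = a)) as [E|Hba]; [left; exact E|right].
    intros l Hl. destruct (H _ (supports_pair a _ _ Hl)) as [E|Hb]; [congruence|exact Hb].
  - intros [->|Hb]; [apply in_supp_pair_fst|].
    intros l Hl. exact (Hb l (supports_pair_snd _ _ _ Hl)).
Qed.

Lemma supp_card_pair_in {X : nominal} (a : nat) {t : X} {n : nat} :
  in_supp t a -> supp_card t n -> @supp_card (prod_nominal X) (a, t) n.
Proof.
  intros Ha [L [N [HL H]]]. exists L; split; [exact N|split; [exact HL|]].
  intros b. rewrite in_supp_pair, H. split; [tauto|intros [->|Hb]; assumption].
Qed.

Lemma supp_card_pair_fresh {X : nominal} (a : nat) {t : X} {n : nat} :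
  ~ in_supp t a -> supp_card t n -> @supp_card (prod_nominal X) (a, t) (S n).
Proof.
  intros Ha [L [N [HL H]]]. exists (a :: L); split; [|split; [cbn; congruence|]].
  - constructor; [rewrite H; exact Ha|exact N].
  - intros b. rewrite in_supp_pair, <- H. cbn. split; intros [E|Hb]; auto.
Qed.

Lemma supp_card_pair_le {X : nominal} {a : nat} {t : X} {n m : nat} :
  supp_card t n -> @supp_card (prod_nominal X) (a, t) m -> m <= S n.
Proof.
  intros Ht Hm. destruct (classic (in_supp t a)) as [Ha|Ha].
  - rewrite (supp_card_unique Hm (supp_card_pair_in a Ha Ht)); lia.
  - rewrite (supp_card_unique Hm (supp_card_pair_fresh a Ha Ht)); lia.
Qed.

Lemma alpha_refl {Y : nominal} (q : nat * Y) : alpha q q.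
Proof.
  destruct q as [y t]. destruct (fin_supp Y t) as [l Hl].
  destruct (fresh_name (y :: l)) as [z Hz].
  assert (Hzy : z <> y) by (intros ->; apply Hz; left; reflexivity).
  assert (Hzt : ~ in_supp t z) by (intros H; apply Hz; right; exact (H l Hl)).
  exists z; cbn; tauto.
Qed.

Lemma theta_eq_alpha {Y : nominal} {p q : nat * Y} : theta p = theta q -> alpha p q.
Proof.
  intros E. change (proj1_sig (theta p) q). rewrite E. apply alpha_refl.
Qed.

Lemma alpha_rename {Y : nominal} {x y : nat} {s t : Y} :
  alpha (y, t) (x, s) -> exists z, act (swap x z) (act (swap y z) t) = s.
Proof.
  intros [z [_ [_ [_ [_ E]]]]]; cbn in E. exists z.
  rewrite E. apply act_involution, swapf_invol.
Qed.

Lemma alpha_in_supp {Y : nominal} {x y : nat} {s t : Y} :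
  alpha (y, t) (x, s) -> in_supp s x -> in_supp t y.
Proof.
  intros Ha. destruct (alpha_rename Ha) as [z <-].
  rewrite !in_supp_act; cbn. rewrite swapf_l, swapf_r. tauto.
Qed.

Section Abstraction.
Context {X Y : nominal} {f : X -> Y} (f_equivariant : equivariant f).

Lemma theta_comp_preimage {u w : X} {x y : nat} :
  theta_comp f ((y, w) : prod_nominal X) = theta_comp f ((x, u) : prod_nominal X) ->
  exists z, f (act (swap x z) (act (swap y z) w)) = f u.
Proof.
  intros E. destruct (alpha_rename (theta_eq_alpha E)) as [z Hz].
  exists z. rewrite !f_equivariant; exact Hz.
Qed.

Lemma theta_comp_in_supp {u w : X} {x y : nat} :
  theta_comp f ((y, w) : prod_nominal X) = theta_comp f ((x, u) : prod_nominal X) ->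
  in_supp (f u) x -> in_supp w y.
Proof.
  intros E Hx. apply (in_supp_equivariant f w y f_equivariant).
  exact (alpha_in_supp (theta_eq_alpha E) Hx).
Qed.

End Abstraction.

Theorem lemma5p41 (X Y : nominal) (f : X -> Y) (u : X) (x : nat) :
  equivariant f -> safe f u -> ~ in_bv f u x ->
  @safe (prod_nominal X) (abs Y) (theta_comp f) ((x, u) : prod_nominal X).
Proof.
  intros Hf [n [Hu Hmax]] Hbv.
  assert (Hbody : forall y w mw,
    theta_comp f ((y, w) : prod_nominal X) = theta_comp f ((x, u) : prod_nominal X) ->
    supp_card w mw -> mw <= n).
  { intros y w mw E Hw. destruct (theta_comp_preimage Hf E) as [z Hz].
    exact (Hmax _ mw Hz (supp_card_act _ (supp_card_act _ Hw))). }
  destruct (classic (in_supp u x)) as [Hx|Hx].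
  - exists n; split; [exact (supp_card_pair_in x Hx Hu)|].
    intros [y w] m E Hm. destruct (supp_card_exists w) as [mw Hw].
    assert (Hfx : in_supp (f u) x) by (apply NNPP; intros H; apply Hbv; split; assumption).
    pose proof (theta_comp_in_supp Hf E Hfx) as Hy.
    rewrite (supp_card_unique Hm (supp_card_pair_in y Hy Hw)).
    exact (Hbody y w mw E Hw).
  - exists (S n); split; [exact (supp_card_pair_fresh x Hx Hu)|].
    intros [y w] m E Hm. destruct (supp_card_exists w) as [mw Hw].
    pose proof (supp_card_pair_le Hw Hm). pose proof (Hbody y w mw E Hw). lia.
Qed.
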